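(* Let $\boldsymbol{u}^\star\in\mathbb{R}^n$ and $f(\boldsymbol{u})=\frac12\|\boldsymbol{u}\boldsymbol{u}^{\mathrm T}-\boldsymbol{u}^\star{\boldsymbol{u}^\star}^{\mathrm T}\|_1$ on $\mathbb{R}^n$. For any spurious stationary point $\boldsymbol{u}$ of $f$ and for $\boldsymbol{w}=\boldsymbol{u}^\star-\boldsymbol{u}$ as well as for $\boldsymbol{w}=-\boldsymbol{u}^\star-\boldsymbol{u}$, one has $df(\boldsymbol{u})(\boldsymbol{w})=0$.
   Context: $\|\cdot\|_1$ is the entrywise $\ell_1$-norm. $df(\boldsymbol{x})(\boldsymbol{w})=\lim_{t\searrow0}(f(\boldsymbol{x}+t\boldsymbol{w})-f(\boldsymbol{x}))/t$. A point $\boldsymbol{u}$ is stationary if $\boldsymbol{0}\in\partial f(\boldsymbol{u})$, where $\partial f(\boldsymbol{u})=\{\boldsymbol{Z}\boldsymbol{u}:\boldsymbol{Z}\text{ symmetric}, \boldsymbol{Z}\in\operatorname{Sign}(\boldsymbol{u}\boldsymbol{u}^{\mathrm T}-\boldsymbol{u}^\star{\boldsymbol{u}^\star}^{\mathrm T})\}$ (entrywise set-valued sign, $\operatorname{Sign}(0)=[-1,1]$) is the (Fréchet = limiting = Clarke) subdifferential; it is spurious if additionally $\boldsymbol{u}\notin\{\boldsymbol{u}^\star,-\boldsymbol{u}^\star\}$. *)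

From HB Require Import structures.
From mathcomp Require Import all_boot all_order all_algebra.
From mathcomp Require Import all_classical all_reals all_analysis.
Set Implicit Arguments. Unset Strict Implicit. Unset Printing Implicit Defensive.
Import Order.TTheory GRing.Theory Num.Theory.
Import numFieldNormedType.Exports.
Local Open Scope classical_set_scope.
Local Open Scope ring_scope.

Definition l1norm (R : realType) (n : nat) (A : 'M[R]_n) : R :=
  \sum_(i < n) \sum_(j < n) `|A i j|.

Definition fobj (R : realType) (n : nat) (us u : 'cV[R]_n) : R :=
  2^-1 * l1norm (u *m u^T - us *m us^T).

Definition in_Sign (R : realType) (x z : R) : Prop :=
  if 0 < x then z = 1 else if x < 0 then z = -1 else -1 <= z <= 1.

(* 0 \in \partial f(u) *)
Definition stationary (R : realType) (n : nat) (us u : 'cV[R]_n) : Prop :=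
  exists Z : 'M[R]_n,
    Z^T = Z /\
    (forall i j, in_Sign ((u *m u^T - us *m us^T) i j) (Z i j)) /\
    Z *m u = 0.

Definition spurious (R : realType) (n : nat) (us u : 'cV[R]_n) : Prop :=
  stationary us u /\ u <> us /\ u <> - us.

Definition dirderiv_is (R : realType) (n : nat) (f : 'cV[R]_n -> R)
    (u w : 'cV[R]_n) (l : R) : Prop :=
  (fun t : R => (f (u + t *: w) - f u) / t) @ 0^'+ --> l.

(* Let Z certify stationarity, put c_k = us_k / u_k on the support of u, and
   Y_kl = sg u_k sg u_l Z_kl.  Row k of Z u = 0 reads sum_l |u_l| Y_kl = 0, where
   Y_kl = sg c_k on {c_l < 1/c_k} and -sg c_k on {c_l > 1/c_k}: so 1/c_k is a
   median of the ratios for the weights |u_l|, and the sign of Y on the ties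
   {c_l = 1/c_k} is forced when 1/c_k is an endpoint of the median interval.
   Comparing rows i and j shows that c_i c_j = 1 forces c_i = c_j, and that
   c_i = c_j = -1 forces Y_ij = -1 unless us = -u.  Hence Z_ij w_i w_j = -|w_i w_j|
   on every vanishing entry of D = u u^T - us us^T, where w = us - u.  Since
   (u + t w)(u + t w)^T - us us^T = (1 - t)(D - t w w^T), for small t > 0 every
   entry has absolute value Z_ij (1 - t)(D_ij - t w_i w_j), and Z u = 0 turns
   the sum into f(u + t w) = (1 - t^2) f(u).  Replacing us by -us gives the
   direction -us - u. *)

From HB Require Import structures.
From mathcomp Require Import all_boot all_order all_algebra.
From mathcomp Require Import all_classical all_reals all_analysis.
From mathcomp Require Import ring lra.
Import Order.TTheory GRing.Theory Num.Theory.
Import numFieldNormedType.Exports.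
Local Open Scope classical_set_scope.
Local Open Scope ring_scope.
Set Implicit Arguments. Unset Strict Implicit. Unset Printing Implicit Defensive.

Section WeightedMedian.
Variables (R : realDomainType) (I : finType) (w c : I -> R).
Hypothesis w_ge0 : forall l, 0 <= w l.

Definition mass_below x := \sum_(l | c l < x) w l.
Definition mass_above x := \sum_(l | x < c l) w l.
Definition mass_at x := \sum_(l | c l == x) w l.

Definition median x := `|mass_below x - mass_above x| <= mass_at x.

Definition balanced (y : I -> R) (sigma x : R) :=
  [/\ \sum_l w l * y l = 0, forall l, `|y l| <= 1, `|sigma| = 1,
      forall l, w l != 0 -> c l < x -> y l = sigma
    & forall l, w l != 0 -> x < c l -> y l = - sigma].

Lemma sum_split_at (F : I -> R) x :
  \sum_l F l =
  \sum_(l | c l < x) F l + \sum_(l | c l == x) F l + \sum_(l | x < c l) F l.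
Proof.
rewrite (bigID (fun l => c l < x)) /= -addrA; congr (_ + _).
rewrite (bigID (fun l => c l == x)) /=; congr (_ + _); apply: eq_bigl => l.
  by case: ltgtP.
by case: ltgtP.
Qed.

Lemma sum_le_subpred (P Q : pred I) :
  {subset P <= Q} -> \sum_(l | P l) w l <= \sum_(l | Q l) w l.
Proof.
move=> PQ; rewrite [leRHS](bigID P) /= (eq_bigl P) ?lerDl ?sumr_ge0 // => l.
exact/andb_idl/PQ.
Qed.

Lemma mass_below_at x : mass_below x + mass_at x = \sum_(l | c l <= x) w l.
Proof.
rewrite [RHS](bigID (fun l => c l < x)) /=.
by congr (_ + _); apply: eq_bigl => l; case: ltgtP.
Qed.

Lemma mass_above_at x : mass_above x + mass_at x = \sum_(l | x <= c l) w l.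
Proof.
rewrite [RHS](bigID (fun l => x < c l)) /=.
by congr (_ + _); apply: eq_bigl => l; case: ltgtP.
Qed.

Lemma median_lt x y : median x -> median y -> x < y ->
  mass_above x = mass_below x + mass_at x /\
  mass_below y = mass_above y + mass_at y.
Proof.
rewrite /median !ler_norml => /andP[mx1 mx2] /andP[my1 my2] xy.
have below : mass_below x + mass_at x <= mass_below y.
  by rewrite mass_below_at; apply: sum_le_subpred => l /= /le_lt_trans; apply.
have above : mass_above y + mass_at y <= mass_above x.
  by rewrite mass_above_at; apply: sum_le_subpred => l /=; apply: lt_le_trans.
split; lra.
Qed.

Lemma median_below_support x : median x -> (forall l, w l != 0 -> x < c l) ->
  \sum_l w l = 0.
Proof.
move=> mx xc; have null l : ~~ (x < c l) -> w l = 0.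
  by apply: contraNeq; apply: xc.
have below : mass_below x = 0.
  by rewrite /mass_below big1 // => l /lt_gtF/negbT; apply: null.
have at0 : mass_at x = 0.
  by rewrite /mass_at big1 // => l /eqP cl; apply: null; rewrite cl ltxx.
move: mx; rewrite /median below at0 sub0r normrN normr_le0 => /eqP above.
rewrite (sum_split_at _ x) -/(mass_below x) -/(mass_at x) -/(mass_above x).
by rewrite below at0 above !add0r.
Qed.

Lemma sum_saturated (P : pred I) (y : I -> R) tau :
  (forall l, `|y l| <= 1) -> `|tau| = 1 ->
  \sum_(l | P l) w l * y l = tau * \sum_(l | P l) w l ->
  forall l, P l -> w l != 0 -> y l = tau.
Proof.
move=> y1 tau1 sat l Pl wl.
have tau2 : tau * tau = 1 by rewrite -expr2 -real_normK ?num_real // tau1 expr1n.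
have slack k : 0 <= w k * (1 - tau * y k).
  rewrite mulr_ge0 // subr_ge0 (le_trans (ler_norm _)) // normrM tau1 mul1r.
  exact: y1.
have /psumr_eq0P zero : \sum_(k | P k) w k * (1 - tau * y k) = 0.
  transitivity (\sum_(k | P k) w k - tau * \sum_(k | P k) w k * y k).
    by rewrite mulr_sumr -sumrB; apply: eq_bigr => k _; ring.
  by rewrite sat mulrA tau2 mul1r subrr.
move/eqP: (zero (fun k _ => slack k) l Pl); rewrite mulf_eq0 (negbTE wl) /=.
rewrite subr_eq0 => /eqP/(congr1 (fun r => tau * r)).
by rewrite mulr1 mulrA tau2 mul1r.
Qed.

Section Balanced.
Variables (y : I -> R) (sigma x : R).
Hypothesis bal : balanced y sigma x.

Lemma balanced_tie_sum :
  \sum_(l | c l == x) w l * y l = sigma * (mass_above x - mass_below x).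
Proof.
case: bal => sum0 _ _ below above.
have side (P : pred I) s : (forall l, P l -> w l != 0 -> y l = s) ->
    \sum_(l | P l) w l * y l = s * \sum_(l | P l) w l.
  move=> Ps; rewrite mulr_sumr; apply: eq_bigr => l Pl.
  by have [->|/(Ps l Pl)->] := eqVneq (w l) 0; rewrite ?mul0r ?mulr0 // mulrC.
rewrite (sum_split_at _ x) (side (fun l => c l < x) sigma) in sum0; last first.
  by move=> l /[swap]; apply: below.
rewrite (side (fun l => x < c l) (- sigma)) in sum0; last first.
  by move=> l /[swap]; apply: above.
move: sum0; rewrite /mass_above /mass_below.
set T := \sum_(l | _) _ * _.
set A := \sum_(l | x < c l) _; set B := \sum_(l | c l < x) _ => sum0.
transitivity (sigma * B + T + - sigma * A + sigma * (A - B)); first by ring.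
by rewrite sum0 add0r.
Qed.

Lemma balanced_median : median x.
Proof.
case: (bal) => _ y1 sigma1 _ _.
rewrite /median -normrN opprB -[leLHS]mul1r -sigma1 -normrM -balanced_tie_sum.
rewrite (le_trans (ler_norm_sum _ _ _)) // ler_sum // => l _.
by rewrite normrM (ger0_norm (w_ge0 l)) ler_piMr.
Qed.

Lemma balanced_tie_above : mass_above x = mass_below x + mass_at x ->
  forall l, c l = x -> w l != 0 -> y l = sigma.
Proof.
case: (bal) => _ y1 sigma1 _ _ eqx l /eqP.
apply: (@sum_saturated (fun k => c k == x) y sigma y1 sigma1).
by rewrite balanced_tie_sum eqx addrC addKr.
Qed.

Lemma balanced_tie_below : mass_below x = mass_above x + mass_at x ->
  forall l, c l = x -> w l != 0 -> y l = - sigma.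
Proof.
case: (bal) => _ y1 sigma1 _ _ eqx l /eqP.
apply: (@sum_saturated (fun k => c k == x) y (- sigma) y1); first by rewrite normrN.
by rewrite balanced_tie_sum eqx opprD addrA subrr sub0r mulrN mulNr.
Qed.

End Balanced.
End WeightedMedian.

Lemma sumr_norm_gt0 (R : numDomainType) (I : finType) (f : I -> R) i :
  f i != 0 -> 0 < \sum_l `|f l|.
Proof.
move=> fi; rewrite (bigD1 i) //= ltr_pwDl ?normr_gt0 //.
exact: sumr_ge0.
Qed.

Section SignSet.
Variable R : realType.
Implicit Types x z : R.

Lemma in_Sign_norm x z : in_Sign x z -> `|z| <= 1.
Proof.
rewrite /in_Sign; case: ifP => _; first by move=> ->; rewrite normr1.
by case: ifP => _; [move=> ->; rewrite normrN normr1 | rewrite ler_norml].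
Qed.

Lemma in_Sign_sg x z : in_Sign x z -> x != 0 -> z = Num.sg x.
Proof.
rewrite /in_Sign; case: (ltgtP x 0) => [x0|x0|->]; last by [].
- by move=> -> _; rewrite ltr0_sg.
- by move=> -> _; rewrite gtr0_sg.
Qed.

Lemma in_Sign_normE x z : in_Sign x z -> `|x| = z * x.
Proof.
have [->|x0 /in_Sign_sg -> //] := eqVneq x 0; first by rewrite normr0 mulr0.
exact: normrEsg.
Qed.

Lemma near0_norm_segment (d b z : R) : in_Sign d z -> (d = 0 -> z * b = - `|b|) ->
  \forall t \near 0^'+, `|(1 - t) * (d - t * b)| = z * ((1 - t) * (d - t * b)).
Proof.
move=> dz tie; have [d0|d0] := eqVneq d 0.
  near=> t; have t0 : 0 < t by near: t; exact: nbhs_right_gt.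
  have t1 : 0 < 1 - t by rewrite subr_gt0; near: t; exact: nbhs_right_lt ltr01.
  rewrite d0 sub0r normrM normrN normrM (gtr0_norm t0) (gtr0_norm t1).
  have -> : z * ((1 - t) * - (t * b)) = (1 - t) * t * - (z * b) by ring.
  by rewrite tie // opprK mulrA.
have K0 : 0 < `|d| / (`|b| + 1) by rewrite divr_gt0 ?normr_gt0 // ltr_pwDr.
near=> t; have t0 : 0 < t by near: t; exact: nbhs_right_gt.
have t1 : 0 < 1 - t by rewrite subr_gt0; near: t; exact: nbhs_right_lt ltr01.
have tK : t * (`|b| + 1) < `|d|.
  by rewrite -ltr_pdivlMr ?ltr_pwDr //; near: t; exact: nbhs_right_lt.
have /andP[tb1 tb2] : - (t * `|b|) <= t * b <= t * `|b|.
  by rewrite -ler_norml normrM (gtr0_norm t0).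
move: dz; rewrite /in_Sign normrM (gtr0_norm t1).
case: (ltgtP d 0) d0 => // dsgn _ ->.
- rewrite (ltr0_norm dsgn) in tK; rewrite ltr0_norm; first by ring.
  by rewrite mulrDr mulr1 in tK; lra.
- rewrite (gtr0_norm dsgn) in tK; rewrite gtr0_norm; first by ring.
  by rewrite mulrDr mulr1 in tK; lra.
Unshelve. all: by end_near.
Qed.

End SignSet.

Section Stationarity.
Variables (R : realType) (I : finType) (u s : I -> R) (Z : I -> I -> R).
Local Notation D i j := (u i * u j - s i * s j).
Local Notation W i j := ((s i - u i) * (s j - u j)).
Hypothesis Z_sym : forall i j, Z i j = Z j i.
Hypothesis Z_sign : forall i j, in_Sign (D i j) (Z i j).
Hypothesis Z_u : forall i, \sum_j Z i j * u j = 0.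

(* Junk value 0 off the support of u, where the weight |u k| vanishes. *)
Definition ratio k := s k / u k.

Definition twistZ k l := Num.sg (u k) * Num.sg (u l) * Z k l.

Let w_ge0 l : 0 <= `|u l| := normr_ge0 (u l).

Let sgr_sqr (x : R) : x != 0 -> Num.sg x * Num.sg x = 1.
Proof. by move=> x0; rewrite -expr2 sqr_sg x0. Qed.

Lemma ratioK k : u k != 0 -> ratio k * u k = s k.
Proof. by move=> uk; rewrite /ratio divfK. Qed.

Lemma entry_ratio k l : u k != 0 -> u l != 0 ->
  D k l = u k * u l * (1 - ratio k * ratio l).
Proof. by move=> uk ul; rewrite /ratio; field; apply/andP. Qed.

Lemma twistZ_sym k l : twistZ k l = twistZ l k.
Proof. by rewrite /twistZ Z_sym [Num.sg (u k) * _]mulrC. Qed.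

Lemma twistZ_bound k l : `|twistZ k l| <= 1.
Proof.
rewrite /twistZ !normrM !normr_sg.
have := in_Sign_norm (Z_sign k l).
by case: (_ != 0); case: (_ != 0); rewrite ?mul1r ?mul0r.
Qed.

Lemma twistZ_row k : \sum_l `|u l| * twistZ k l = 0.
Proof.
transitivity (Num.sg (u k) * \sum_l Z k l * u l); last by rewrite Z_u mulr0.
rewrite mulr_sumr; apply: eq_bigr => l _.
by rewrite /twistZ [in RHS](numEsg (u l)); ring.
Qed.

Lemma twistZ_sg k l : u k != 0 -> u l != 0 -> ratio k * ratio l != 1 ->
  twistZ k l = Num.sg (1 - ratio k * ratio l).
Proof.
move=> uk ul kl; rewrite /twistZ (in_Sign_sg (Z_sign k l)); last first.
  by rewrite entry_ratio // !mulf_neq0 // subr_eq0 eq_sym.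
rewrite entry_ratio // !sgrM.
transitivity (Num.sg (u k) * Num.sg (u k) * (Num.sg (u l) * Num.sg (u l)) *
  Num.sg (1 - ratio k * ratio l)); first by ring.
by rewrite !sgr_sqr // !mul1r.
Qed.

Lemma ratio_neq0 k : u k != 0 -> ratio k != 0.
Proof.
move=> uk; apply/eqP => ck0.
have /psumr_eq0P null : \sum_l `|u l| = 0.
  rewrite -[RHS](twistZ_row k); apply: eq_bigr => l _.
  have [->|ul] := eqVneq (u l) 0; first by rewrite normr0 mul0r.
  have ne1 : ratio k * ratio l != 1 by rewrite ck0 mul0r eq_sym oner_eq0.
  by rewrite twistZ_sg // ck0 mul0r subr0 sgr1 mulr1.
by move/eqP: (null (fun l _ => w_ge0 l) k isT); rewrite normr_eq0 (negbTE uk).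
Qed.

Lemma twistZ_balanced k : u k != 0 ->
  balanced (fun l => `|u l|) ratio (twistZ k) (Num.sg (ratio k)) (ratio k)^-1.
Proof.
move=> uk; have ck := ratio_neq0 uk.
have twistZE l : u l != 0 -> ratio l != (ratio k)^-1 ->
    twistZ k l = Num.sg (ratio k) * Num.sg ((ratio k)^-1 - ratio l).
  move=> ul lk; rewrite twistZ_sg //; first by rewrite -sgrM mulrBr divff.
  by apply: contra lk => /eqP/mulr1_eq ->.
split.
- exact: twistZ_row.
- exact: twistZ_bound.
- by rewrite normr_sg ck.
- move=> l; rewrite normr_eq0 => ul lk.
  by rewrite twistZE ?(lt_eqF lk) // [Num.sg (_ - _)]gtr0_sg ?subr_gt0 // mulr1.
- move=> l; rewrite normr_eq0 => ul kl.
  by rewrite twistZE ?(gt_eqF kl) // [Num.sg (_ - _)]ltr0_sg ?subr_lt0 // mulrN1.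
Qed.

Lemma ratio_reciprocal_eq i j : u i != 0 -> u j != 0 ->
  ratio i * ratio j = 1 -> ratio i = ratio j.
Proof.
wlog lt_ij : i j / ratio i < ratio j.
  move=> wlog ui uj e; case: (ltgtP (ratio i) (ratio j)) => [lt|lt|//].
    exact: wlog.
  by apply/esym/wlog => //; rewrite mulrC.
move=> ui uj e; have inv_i : (ratio i)^-1 = ratio j := mulr1_eq e.
have inv_j : (ratio j)^-1 = ratio i by apply: mulr1_eq; rewrite mulrC.
have bal_i := twistZ_balanced ui; have bal_j := twistZ_balanced uj.
rewrite inv_i in bal_i; rewrite inv_j in bal_j.
(* Both ratios are medians; the smaller one forces twistZ j i = sg (ratio j), the
   larger one twistZ i j = - sg (ratio i), while the two ratios have the same sign. *)
have [above below] :=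
  median_lt w_ge0 (balanced_median w_ge0 bal_j) (balanced_median w_ge0 bal_i) lt_ij.
have Yji : twistZ j i = Num.sg (ratio j).
  by apply: (balanced_tie_above w_ge0 bal_j above); rewrite ?normr_eq0.
have Yij : twistZ i j = - Num.sg (ratio i).
  by apply: (balanced_tie_below w_ge0 bal_i below); rewrite ?normr_eq0.
have := twistZ_sym i j; rewrite Yji Yij => opp.
have : Num.sg (ratio i) * Num.sg (ratio j) = 1 by rewrite -sgrM e sgr1.
rewrite -opp; nra.
Qed.

Lemma opp_of_ratios_neg1 i : u i != 0 -> (forall k, u k != 0 -> ratio k = -1) ->
  forall k, s k = - u k.
Proof.
move=> ui neg1 k; have [uk|uk] := eqVneq (u k) 0; last first.
  by rewrite -(ratioK uk) neg1 // mulN1r.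
rewrite uk oppr0; apply/eqP/contraT => sk.
have row l : Z k l * u l = Num.sg (s k) * `|u l|.
  have [->|ul] := eqVneq (u l) 0; first by rewrite normr0 !mulr0.
  have entry : D k l = s k * u l.
    by rewrite uk -(ratioK ul) neg1 //; ring.
  by rewrite (in_Sign_sg (Z_sign k l)) entry ?mulf_neq0 // sgrM -mulrA -normrEsg.
have : Num.sg (s k) * \sum_l `|u l| = 0.
  by rewrite mulr_sumr -[RHS](Z_u k); apply: eq_bigr => l _; rewrite row.
move/eqP; rewrite mulf_eq0 sgr_eq0 (negbTE sk) /=.
by rewrite gt_eqF // (sumr_norm_gt0 ui).
Qed.

Lemma tie_support i j : u i * u j = s i * s j -> s i != u i -> s j != u j ->
  u i != 0.
Proof.
move=> tie si sj; apply/negP => /eqP ui0; rewrite ui0 in si tie.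
have sj0 : s j = 0.
  by move/esym/eqP: tie; rewrite mul0r mulf_eq0 (negbTE si) => /eqP.
have uj : u j != 0 by rewrite sj0 eq_sym in sj.
by move: (ratio_neq0 uj); rewrite /ratio sj0 mul0r eqxx.
Qed.

Hypothesis s_neq_opp : ~ (forall k, s k = - u k).

Lemma twistZ_ratio_neg1 i j : u i != 0 -> u j != 0 ->
  ratio i = -1 -> ratio j = -1 -> twistZ i j = -1.
Proof.
move=> ui uj ri rj.
have inv l : u l != 0 -> ratio l * (ratio l)^-1 = 1.
  by move=> ul; rewrite divff // ratio_neq0.
have bal_i := twistZ_balanced ui; rewrite ri invrN1 sgrN1 in bal_i.
suff above : mass_above (fun l => `|u l|) ratio (-1) =
    mass_below (fun l => `|u l|) ratio (-1) + mass_at (fun l => `|u l|) ratio (-1).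
  by apply: (balanced_tie_above w_ge0 bal_i above) => //; rewrite normr_eq0.
have [k [uk gt_k]] : exists k, u k != 0 /\ -1 < (ratio k)^-1.
  apply: contrapT => none; apply: s_neq_opp; apply: (opp_of_ratios_neg1 ui).
  have range l : u l != 0 -> -1 <= ratio l < 0.
    move=> ul; have := inv l ul; have : (ratio l)^-1 <= -1.
      by rewrite leNgt; apply/negP => lt; apply: none; exists l.
    by move=> le1 eq1; apply/andP; split; nra.
  move=> k uk; apply/eqP/contraT => ne.
  have /andP[k1 k0] := range k uk.
  have lt_k : (ratio k)^-1 < -1.
    have k1' : -1 < ratio k by rewrite lt_neqAle eq_sym ne.
    have := inv k uk; nra.
  have := median_below_support (balanced_median w_ge0 (twistZ_balanced uk)).
  move=> /(_ _)/eqP; rewrite gt_eqF ?(sumr_norm_gt0 ui) //; apply.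
  move=> l; rewrite normr_eq0 => ul; have /andP[l1 _] := range l ul.
  exact: lt_le_trans l1.
by have [] := median_lt w_ge0 (balanced_median w_ge0 bal_i)
  (balanced_median w_ge0 (twistZ_balanced uk)) gt_k.
Qed.

Lemma Z_tie i j : u i * u j = s i * s j ->
  Z i j * W i j = - `|W i j|.
Proof.
move=> tie; have [->|] := eqVneq (W i j) 0.
  by rewrite mulr0 normr0 oppr0.
rewrite mulf_eq0 negb_or !subr_eq0 => /andP[si sj].
have ui := tie_support tie si sj.
have uj : u j != 0 by apply: (tie_support _ sj si); rewrite mulrC tie mulrC.
have recip : ratio i * ratio j = 1.
  move/eqP: tie; rewrite -subr_eq0 entry_ratio // !mulf_eq0 (negbTE ui) (negbTE uj).
  by rewrite subr_eq0 eq_sym => /eqP.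
have eq_ij := ratio_reciprocal_eq ui uj recip.
have ri : ratio i = -1.
  have ri1 : ratio i != 1.
    by apply: contra si => /eqP ri1; rewrite -(ratioK ui) ri1 mul1r.
  have : (ratio i - 1) * (ratio i + 1) = ratio i * ratio j - 1.
    by rewrite -eq_ij; ring.
  rewrite recip subrr => /eqP; rewrite mulf_eq0 subr_eq0 (negbTE ri1) addr_eq0.
  by move/eqP.
have Zij : Z i j = Num.sg (u i) * Num.sg (u j) * twistZ i j.
  transitivity (Num.sg (u i) * Num.sg (u i) * (Num.sg (u j) * Num.sg (u j)) * Z i j).
    by rewrite !sgr_sqr // !mul1r.
  by rewrite /twistZ; ring.
have rj : ratio j = -1 by rewrite -eq_ij.
rewrite Zij (twistZ_ratio_neg1 ui uj ri rj) -(ratioK ui) -(ratioK uj) ri rj.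
have -> : (-1 * u i - u i) * (-1 * u j - u j) = 4 * (u i * u j) by ring.
by rewrite !normrM normr_nat !normrEsg; ring.
Qed.

Lemma Z_bilinear (x : I -> R) :
  \sum_i \sum_j Z i j * (u i * x j + x i * u j) = 0.
Proof.
transitivity (\sum_i \sum_j x j * (Z j i * u i) + \sum_i x i * \sum_j Z i j * u j).
  rewrite -big_split; apply: eq_bigr => i _ /=.
  rewrite mulr_sumr -big_split; apply: eq_bigr => j _ /=.
  by rewrite Z_sym; ring.
by rewrite exchange_big /= !big1 ?addr0 // => i _; rewrite -?mulr_sumr Z_u mulr0.
Qed.

Lemma Z_segment_sum :
  \sum_i \sum_j Z i j * W i j =
  - \sum_i \sum_j `|D i j|.
Proof.
have E i j : Z i j * W i j = - `|D i j| -
    Z i j * (u i * (s j - u j) + (s i - u i) * u j).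
  by rewrite (in_Sign_normE (Z_sign i j)); ring.
under eq_bigr => i _ do rewrite (eq_bigr _ (fun j _ => E i j)) sumrB sumrN.
by rewrite sumrB sumrN (Z_bilinear (fun k => s k - u k)) subr0.
Qed.

Lemma l1_segment_near : \forall t \near 0^'+,
  \sum_i \sum_j `|(1 - t) * (D i j - t * W i j)| =
  (1 - t ^+ 2) * \sum_i \sum_j `|D i j|.
Proof.
have entrywise : \forall t \near 0^'+, forall i j,
    `|(1 - t) * (D i j - t * W i j)| =
    Z i j * ((1 - t) * (D i j - t * W i j)).
  apply: filter_forall => i; apply: filter_forall => j.
  apply: near0_norm_segment (Z_sign i j) _ => /eqP; rewrite subr_eq0 => /eqP.
  exact: Z_tie.
apply: filterS entrywise => t Ht.
have E i j : Z i j * ((1 - t) * (D i j - t * W i j)) =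
    (1 - t) * `|D i j| - (1 - t) * t * (Z i j * W i j).
  by rewrite (in_Sign_normE (Z_sign i j)); ring.
under eq_bigr => i _ do
  rewrite (eq_bigr _ (fun j _ => Ht i j)) (eq_bigr _ (fun j _ => E i j)) sumrB -!mulr_sumr.
by rewrite sumrB -!mulr_sumr Z_segment_sum; ring.
Qed.

End Stationarity.

Lemma outer_diff_entry (R : realType) (n : nat) (us v : 'cV[R]_n) i j :
  (v *m v^T - us *m us^T) i j = v i 0 * v j 0 - us i 0 * us j 0.
Proof. by rewrite !mxE !big_ord1 !mxE. Qed.

Lemma outer_opp (R : realType) (n : nat) (v : 'cV[R]_n) :
  (- v) *m (- v)^T = v *m v^T.
Proof. by rewrite linearN mulNmx mulmxN opprK. Qed.

Lemma fobj_opp (R : realType) (n : nat) (us : 'cV[R]_n) : fobj (- us) = fobj us.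
Proof. by apply: funext => v; rewrite /fobj outer_opp. Qed.

Lemma fobj_segment_near (R : realType) (n : nat) (us u : 'cV[R]_n) :
  stationary us u -> u <> - us ->
  \forall t \near 0^'+, fobj us (u + t *: (us - u)) = (1 - t ^+ 2) * fobj us u.
Proof.
move=> [Z [Zsym [Zsign Zu]]] ne.
have Z_sym i j : Z i j = Z j i by rewrite -[in LHS]Zsym mxE.
have Z_sign i j : in_Sign (u i 0 * u j 0 - us i 0 * us j 0) (Z i j).
  by rewrite -outer_diff_entry.
have Z_u i : \sum_j Z i j * u j 0 = 0.
  by have := congr1 (fun M : 'cV[R]_n => M i 0) Zu; rewrite !mxE.
have s_neq_opp : ~ (forall k, us k 0 = - u k 0).
  by move=> opp; apply: ne; apply/matrixP => i j; rewrite (ord1 j) !mxE opp opprK.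
apply: filterS (l1_segment_near Z_sym Z_sign Z_u s_neq_opp) => t Ht.
rewrite /fobj /l1norm mulrCA; congr (_ * _).
under [in RHS]eq_bigr do under eq_bigr do rewrite outer_diff_entry.
rewrite -Ht; apply: eq_bigr => i _; apply: eq_bigr => j _.
by rewrite !outer_diff_entry !mxE; congr `|_|; ring.
Qed.

Lemma dirderiv_segment (R : realType) (n : nat) (us u : 'cV[R]_n) :
  stationary us u -> u <> - us -> dirderiv_is (fobj us) u (us - u) 0.
Proof.
move=> st ne; rewrite /dirderiv_is.
have quot : \forall t \near 0^'+,
    - fobj us u * t = (fobj us (u + t *: (us - u)) - fobj us u) / t.
  apply: filterS2 (fobj_segment_near st ne) (nbhs_right_gt 0) => t -> t0.
  by field; rewrite gt_eqF.
apply: cvg_trans (near_eq_cvg quot) _.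
suff : - fobj us u * t @[t --> 0^'+] --> - fobj us u * 0 by rewrite mulr0.
by apply: (@cvgMl_tmp _ _ 0^'+); apply: cvg_at_right_filter; exact: cvg_id.
Qed.

Unset Implicit Arguments.

Theorem lemma2 (R : realType) (n : nat) (us u : 'cV[R]_n) :
  spurious us u ->
  dirderiv_is (fobj us) u (us - u) 0 /\ dirderiv_is (fobj us) u (- us - u) 0.
Proof.
move=> [st [ne_s ne_opp]]; split; first exact: dirderiv_segment.
rewrite -fobj_opp; apply: dirderiv_segment; last by rewrite opprK.
by move: st; rewrite /stationary outer_opp.
Qed.
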